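(* Let $A\in\mathbb{R}^{n\times d}$, let $f:\mathbb{R}^n\to\mathbb{R}\cup\{+\infty\}$ and $g:\mathbb{R}^d\to\mathbb{R}\cup\{+\infty\}$ be closed convex, with $f$ $(1/\gamma)$-smooth ($\gamma\ge0$) and $g$ $\mu$-strongly convex ($\mu\ge0$), and let $R=\|A\|_2$. Consider the iterates of the DAPD method (described in the context) and the functions $\phi_t$ and values $\phi_t^*=\min_{x}\phi_t(x)$ defined in the context. Fix $t\ge0$ and assume $\eta_t(1+B_{t-1}\mu)\ge\beta_t$. Then $$\phi_{t+1}^*-\phi_t^*\ge\beta_t\left(g(\bar{x}^{t+1})+\langle y^{t+1},A\bar{x}^{t+1}\rangle\right)-\frac{\beta_tR^2\eta_t}{2}\|y^{t+1}-y^t\|_2^2.$$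
   Context: $f^*$ is the convex conjugate of $f$; $\operatorname{prox}_h(u)=\arg\min_v\{h(v)+\frac12\|v-u\|_2^2\}$. Convention: $\gamma=0$ means $f$ need not be smooth; $\mu=0$ means $g$ is merely convex. DAPD method: given $x^0\in\mathbb{R}^d$, $y^0\in\mathbb{R}^n$ and positive step sizes $\{\beta_t\},\{\eta_t\},\{\tau_t\}$, set $B_t=\sum_{k=0}^t\beta_k$ (with $B_{-1}=0$) and for $t=0,1,\dots$ compute $\bar{x}^{t+1}=\operatorname{prox}_{\eta_t g}(x^t-\eta_tA^\top y^t)$, $y^{t+1}=\operatorname{prox}_{\tau_t f^*}(y^t+\tau_tA\bar{x}^{t+1})$, $x^{t+1}=\operatorname{prox}_{B_tg}(x^0-\sum_{k=0}^t\beta_kA^\top y^{k+1})$. Potential: $\phi_t(x)=\frac12\|x-x^0\|_2^2+\sum_{k=0}^{t-1}\beta_k\big(g(x)+\langle y^{k+1},Ax\rangle\big)$ (so $\phi_0(x)=\frac12\|x-x^0\|_2^2$), and $\phi_t^*=\min_{x\in\mathbb{R}^d}\phi_t(x)$. *)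

From HB Require Import structures.
From mathcomp Require Import all_boot all_order all_algebra.
From mathcomp Require Import all_classical all_reals all_analysis.
Set Implicit Arguments. Unset Strict Implicit. Unset Printing Implicit Defensive.
Import Order.TTheory GRing.Theory Num.Theory.
Local Open Scope classical_set_scope.
Local Open Scope ring_scope.

Section Defs.
Variable R : realType.

Definition dotv (m : nat) (u v : 'cV[R]_m) : R := \sum_(i < m) u i 0 * v i 0.
Definition norm2 (m : nat) (u : 'cV[R]_m) : R := Num.sqrt (dotv u u).

Definition opnorm (n d : nat) (A : 'M[R]_(n, d)) : R :=
  sup [set norm2 (A *m x) | x in [set x : 'cV[R]_d | norm2 x <= 1]].

(* proper: never -oo (by the codomain R U {+oo}) and not identically +oo *)
Definition proper_fun (m : nat) (h : 'cV[R]_m -> \bar R) : Prop :=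
  (forall x, h x != -oo%E) /\ exists x, h x != +oo%E.

Definition convex_fun (m : nat) (h : 'cV[R]_m -> \bar R) : Prop :=
  forall (x y : 'cV[R]_m) (l : R), 0 < l < 1 ->
    (h (l *: x + (1 - l) *: y)%R <= l%:E * h x + (1 - l)%R%:E * h y)%E.

(* closed = lower semicontinuous = all sublevel sets are (sequentially) closed *)
Definition closed_fun (m : nat) (h : 'cV[R]_m -> \bar R) : Prop :=
  forall (alpha : R) (u : nat -> 'cV[R]_m) (x : 'cV[R]_m),
    (fun k => norm2 (u k - x)) @ \oo --> 0 ->
    (forall k, (h (u k) <= alpha%:E)%E) -> (h x <= alpha%:E)%E.

Definition strongly_convex (m : nat) (mu : R) (h : 'cV[R]_m -> \bar R) : Prop :=
  forall (x y : 'cV[R]_m) (l : R), 0 < l < 1 ->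
    (h (l *: x + (1 - l) *: y)%R <=
       l%:E * h x + (1 - l)%R%:E * h y
       - (mu / 2 * l * (1 - l) * (norm2 (x - y)) ^+ 2)%R%:E)%E.

(* (1/gamma)-smoothness; gamma = 0 means no smoothness assumption.
   For gamma > 0: h is finite, differentiable with gradient G, and G is
   (1/gamma)-Lipschitz. *)
Definition smooth_inv (m : nat) (gamma : R) (h : 'cV[R]_m -> \bar R) : Prop :=
  gamma = 0 \/
  (0 < gamma /\ exists (h0 : 'cV[R]_m -> R) (G : 'cV[R]_m -> 'cV[R]_m),
     (forall x, h x = (h0 x)%:E) /\
     (forall x (eps : R), 0 < eps -> exists2 del : R, 0 < del &
        forall hh : 'cV[R]_m, norm2 hh < del ->
          `|h0 (x + hh) - h0 x - dotv (G x) hh| <= eps * norm2 hh) /\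
     (forall x y, norm2 (G x - G y) <= gamma^-1 * norm2 (x - y))).

Definition conj_fun (m : nat) (h : 'cV[R]_m -> \bar R) (y : 'cV[R]_m) : \bar R :=
  ereal_sup [set ((dotv y x)%:E - h x)%E | x in [set: 'cV[R]_m]].

Definition is_prox (m : nat) (h : 'cV[R]_m -> \bar R) (u p : 'cV[R]_m) : Prop :=
  forall v : 'cV[R]_m,
    (h p + (2^-1 * norm2 (p - u)%R ^+ 2)%R%:E <= h v + (2^-1 * norm2 (v - u)%R ^+ 2)%R%:E)%E.

(* B_{t-1} = Bsum beta t = sum_{k < t} beta_k  (so B_{-1} = Bsum beta 0 = 0) *)
Definition Bsum (beta : nat -> R) (t : nat) : R := \sum_(k < t) beta k.

Definition phi (n d : nat) (A : 'M[R]_(n, d)) (g : 'cV[R]_d -> \bar R)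
  (beta : nat -> R) (y : nat -> 'cV[R]_n) (x0 : 'cV[R]_d) (t : nat)
  (x : 'cV[R]_d) : \bar R :=
  ((2^-1 * norm2 (x - x0)%R ^+ 2)%R%:E +
   \sum_(k < t) (beta k)%:E * (g x + (dotv (y k.+1) (A *m x))%:E))%E.

(* phi_t^* = min_x phi_t(x) (taken as the infimum, which is attained) *)
Definition phistar (n d : nat) (A : 'M[R]_(n, d)) (g : 'cV[R]_d -> \bar R)
  (beta : nat -> R) (y : nat -> 'cV[R]_n) (x0 : 'cV[R]_d) (t : nat) : \bar R :=
  ereal_inf [set phi A g beta y x0 t x | x in [set: 'cV[R]_d]].

End Defs.

(* Up to an additive constant, phi_t is B_{t-1} g plus half the squared distance
   to x^0 - sum_{k<t} beta_k A^T y^{k+1}, so it is minimised exactly at the prox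
   point x^t, and (1 + B_{t-1} mu)-strong convexity gives
   phi_t v >= phi_t^* + (1 + B_{t-1} mu)/2 ||v - x^t||^2.  As phi_{t+1} adds
   beta_t (g + <y^{t+1}, A .>) to phi_t, the increment phi_{t+1}^* - phi_t^* is
   at least beta_t (g + <y^{t+1}, A .>)(x^{t+1}) + (1 + B_{t-1} mu)/2 ||x^{t+1} - x^t||^2.
   Testing the prox inequality defining xbar^{t+1} at x^{t+1} moves the first
   term to xbar^{t+1}, at the price of ||x^{t+1} - x^t||^2 / (2 eta_t), absorbed
   thanks to beta_t <= eta_t (1 + B_{t-1} mu), and of the cross term
   <y^{t+1} - y^t, A (x^{t+1} - xbar^{t+1})>, bounded by Young's inequality and
   ||A|| = R. *)

From HB Require Import structures.
From mathcomp Require Import all_boot all_order all_algebra.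
From mathcomp Require Import all_classical all_reals all_analysis.
From mathcomp Require Import ring lra.
Import Order.TTheory GRing.Theory Num.Theory.
Set Implicit Arguments. Unset Strict Implicit. Unset Printing Implicit Defensive.
Local Open Scope classical_set_scope.
Local Open Scope ring_scope.

Section InnerProduct.
Variables (R : realType) (m : nat).
Implicit Types (u v w : 'cV[R]_m) (a : R).

Lemma dotvC u v : dotv u v = dotv v u.
Proof. by apply: eq_bigr => i _; rewrite mulrC. Qed.

Lemma dotvDl u v w : dotv (u + v) w = dotv u w + dotv v w.
Proof. by rewrite /dotv -big_split; apply: eq_bigr => i _; rewrite mxE mulrDl. Qed.

Lemma dotvZl a u w : dotv (a *: u) w = a * dotv u w.
Proof. by rewrite /dotv mulr_sumr; apply: eq_bigr => i _; rewrite mxE mulrA. Qed.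

Lemma dotvNl u w : dotv (- u) w = - dotv u w.
Proof. by rewrite -scaleN1r dotvZl mulN1r. Qed.

Lemma dotvBl u v w : dotv (u - v) w = dotv u w - dotv v w.
Proof. by rewrite dotvDl dotvNl. Qed.

Lemma dotvDr u v w : dotv w (u + v) = dotv w u + dotv w v.
Proof. by rewrite dotvC dotvDl !(dotvC w). Qed.

Lemma dotvZr a u w : dotv w (a *: u) = a * dotv w u.
Proof. by rewrite dotvC dotvZl dotvC. Qed.

Lemma dotvBr u v w : dotv w (u - v) = dotv w u - dotv w v.
Proof. by rewrite dotvC dotvBl !(dotvC w). Qed.

Lemma dotv0l w : dotv 0 w = 0.
Proof. by rewrite -(scale0r 0) dotvZl mul0r. Qed.

Lemma dotv0r w : dotv w 0 = 0.
Proof. by rewrite dotvC dotv0l. Qed.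

Lemma dotvv_ge0 u : 0 <= dotv u u.
Proof. by apply: sumr_ge0 => i _; rewrite -expr2 sqr_ge0. Qed.

Lemma dotvv_eq0 u : (dotv u u == 0) = (u == 0).
Proof.
apply/eqP/eqP => [u0|->]; last exact: dotv0l.
apply/matrixP => i j; rewrite (ord1 j) mxE.
have sq_ge0 k : xpredT k -> 0 <= u k 0 * u k 0 by rewrite -expr2 sqr_ge0.
by have /eqP := psumr_eq0P sq_ge0 u0 (i := i) isT; rewrite mulf_eq0 orbb => /eqP.
Qed.

Lemma norm2_ge0 u : 0 <= norm2 u.
Proof. exact: sqrtr_ge0. Qed.

Lemma sqr_norm2 u : norm2 u ^+ 2 = dotv u u.
Proof. by rewrite sqr_sqrtr // dotvv_ge0. Qed.

Lemma norm2_eq0 u : (norm2 u == 0) = (u == 0).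
Proof. by rewrite sqrtr_eq0 le_eqVlt ltNge dotvv_ge0 orbF dotvv_eq0. Qed.

Lemma norm2_0 : norm2 (0 : 'cV[R]_m) = 0.
Proof. by apply/eqP; rewrite norm2_eq0. Qed.

Lemma norm2Z a u : norm2 (a *: u) = `|a| * norm2 u.
Proof.
by rewrite /norm2 dotvZl dotvZr mulrA -expr2 sqrtrM ?sqr_ge0 // sqrtr_sqr.
Qed.

Lemma norm2_distC u v : norm2 (u - v) = norm2 (v - u).
Proof. by rewrite -opprB -scaleN1r norm2Z normrN1 mul1r. Qed.

Lemma sqr_norm2D u v :
  norm2 (u + v) ^+ 2 = norm2 u ^+ 2 + 2 * dotv u v + norm2 v ^+ 2.
Proof. by rewrite !sqr_norm2 dotvDl !dotvDr (dotvC v u); ring. Qed.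

Lemma sqr_norm2B u v :
  norm2 (u - v) ^+ 2 = norm2 u ^+ 2 - 2 * dotv u v + norm2 v ^+ 2.
Proof. by rewrite !sqr_norm2 dotvBl !dotvBr (dotvC v u); ring. Qed.

Lemma coord_le_norm2 u i : `|u i 0| <= norm2 u.
Proof.
rewrite -sqrtr_sqr ler_sqrt ?dotvv_ge0 // /dotv (bigD1 i) //= expr2 lerDl.
by apply: sumr_ge0 => j _; rewrite -expr2 sqr_ge0.
Qed.

Lemma dotv_le_norm2 u v : dotv u v <= norm2 u * norm2 v.
Proof.
have [/eqP|nu_neq0] := eqVneq (norm2 u * norm2 v) 0.
  rewrite mulf_eq0 !norm2_eq0 => /orP[]/eqP->;
  by rewrite ?dotv0l ?dotv0r norm2_0 ?mul0r ?mulr0.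
have nuv_gt0 : 0 < norm2 u * norm2 v.
  by rewrite lt_neqAle eq_sym nu_neq0 mulr_ge0 ?norm2_ge0.
have := sqr_ge0 (norm2 (norm2 v *: u - norm2 u *: v)).
rewrite sqr_norm2B !norm2Z dotvZl dotvZr !ger0_norm ?norm2_ge0 //.
nra.
Qed.

Lemma sqr_norm2_complete (u a s : 'cV[R]_m) :
  2^-1 * norm2 (u - a) ^+ 2 + dotv s u =
  2^-1 * norm2 (u - (a - s)) ^+ 2 + (dotv s a - 2^-1 * norm2 s ^+ 2).
Proof.
have -> : u - (a - s) = (u - a) + s by apply/matrixP => i j; rewrite !mxE; ring.
by rewrite (sqr_norm2D (u - a) s) dotvBl (dotvC u s) (dotvC a s); lra.
Qed.

Lemma sqr_norm2_comb (u v p : 'cV[R]_m) (l : R) :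
  norm2 (l *: v + (1 - l) *: p - u) ^+ 2 =
  l * norm2 (v - u) ^+ 2 + (1 - l) * norm2 (p - u) ^+ 2
    - l * (1 - l) * norm2 (v - p) ^+ 2.
Proof.
have -> : l *: v + (1 - l) *: p - u = l *: (v - u) + (1 - l) *: (p - u).
  by apply/matrixP => i j; rewrite !mxE; ring.
have -> : v - p = (v - u) - (p - u) by apply/matrixP => i j; rewrite !mxE; ring.
move: (v - u) (p - u) => a b.
rewrite !sqr_norm2 !dotvBl !dotvBr !dotvDl !dotvDr !dotvZl !dotvZr (dotvC b a); ring.
Qed.

End InnerProduct.

Lemma dotv_mulmx (R : realType) n d (A : 'M[R]_(n, d))
    (u : 'cV[R]_n) (w : 'cV[R]_d) :
  dotv u (A *m w) = dotv (A^T *m u) w.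
Proof.
rewrite /dotv (eq_bigr (fun i => \sum_j u i 0 * (A i j * w j 0))); last first.
  by move=> i _; rewrite mxE mulr_sumr.
rewrite exchange_big; apply: eq_bigr => j _; rewrite mxE mulr_suml.
by apply: eq_bigr => i _; rewrite mxE mulrCA mulrA.
Qed.

Section OperatorNorm.
Variables (R : realType) (n d : nat) (A : 'M[R]_(n, d)).

Lemma opnorm_has_sup :
  has_sup [set norm2 (A *m x) | x in [set x : 'cV[R]_d | norm2 x <= 1]].
Proof.
split; first by exists (norm2 (A *m 0)), 0; rewrite //= norm2_0.
pose c i := \sum_(j < d) `|A i j|.
have c_ge0 i : 0 <= c i by apply: sumr_ge0.
exists (Num.sqrt (\sum_(i < n) c i ^+ 2)) => _ [x x_le1 <-].
rewrite ler_sqrt; last by apply: sumr_ge0 => i _; rewrite sqr_ge0.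
apply: ler_sum => i _; rewrite -expr2 -real_normK ?num_real // ler_sqr ?nnegrE //.
rewrite mxE; apply: le_trans (ler_norm_sum _ _ _) _; apply: ler_sum => j _.
by rewrite normrM ler_piMr // (le_trans (coord_le_norm2 x j)).
Qed.

Lemma opnorm_le w : norm2 (A *m w) <= opnorm A * norm2 w.
Proof.
have [/eqP|w_neq0] := eqVneq (norm2 w) 0.
  by rewrite norm2_eq0 => /eqP->; rewrite mulmx0 !norm2_0 mulr0.
have w_gt0 : 0 < norm2 w by rewrite lt_neqAle eq_sym w_neq0 norm2_ge0.
rewrite -ler_pdivrMr // mulrC -[(norm2 w)^-1]ger0_norm ?invr_ge0 ?norm2_ge0 //.
rewrite -norm2Z scalemxAr; apply: sup_upper_bound; first exact: opnorm_has_sup.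
exists ((norm2 w)^-1 *: w) => //=.
by rewrite norm2Z ger0_norm ?invr_ge0 ?norm2_ge0 // mulVf.
Qed.

Lemma dotv_mulmx_young (a : 'cV[R]_n) (w : 'cV[R]_d) (e : R) : 0 <= e ->
  2 * e * dotv a (A *m w) <= norm2 w ^+ 2 + e ^+ 2 * opnorm A ^+ 2 * norm2 a ^+ 2.
Proof.
move=> e_ge0.
have CS : dotv a (A *m w) <= norm2 a * (opnorm A * norm2 w).
  exact: le_trans (dotv_le_norm2 _ _) (ler_wpM2l (norm2_ge0 a) (opnorm_le w)).
have := sqr_ge0 (e * opnorm A * norm2 a - norm2 w).
have := norm2_ge0 a; nra.
Qed.

End OperatorNorm.

Lemma le0_of_le_mul01 (R : realFieldType) (z k : R) : 0 <= k ->
  (forall l, 0 < l < 1 -> z <= l * k) -> z <= 0.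
Proof.
move=> k_ge0 z_le; apply/ler_addgt0Pr => e e_gt0; rewrite add0r.
have l01 : 0 < e / (2 * e + k) < 1.
  by rewrite divr_gt0 ?ltr_pdivrMr /=; lra.
apply: le_trans (z_le _ l01) _.
by rewrite mulrAC ler_pdivrMr; nra.
Qed.

Lemma strongly_convex0 (R : realType) m (h : 'cV[R]_m -> \bar R) :
  convex_fun h -> strongly_convex 0 h.
Proof. by move=> h_cvx x y l l01; rewrite !mul0r sube0; exact: h_cvx. Qed.

Section Prox.
Variables (R : realType) (m : nat) (h : 'cV[R]_m -> \bar R) (c : R) (u p : 'cV[R]_m).
Hypotheses (h_ninfty : forall x, h x != -oo%E) (c_gt0 : 0 < c).
Hypothesis p_prox : is_prox (fun v => (c%:E * h v)%E) u p.

Lemma prox_fin_num : (exists x, h x != +oo%E) -> h p \is a fin_num.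
Proof.
move=> [x0 hx0]; rewrite fin_numE h_ninfty /=; apply: contra hx0 => /eqP hp_oo.
have := p_prox x0; rewrite hp_oo mulry gtr0_sg // mul1e addye // leye_eq.
by case: (h x0) (h_ninfty x0) => // r _; rewrite -EFinM -EFinD.
Qed.

Lemma prox_quadratic_growth (mu rp rv : R) (v : 'cV[R]_m) :
  0 <= mu -> strongly_convex mu h -> h p = rp%:E -> h v = rv%:E ->
  c * rp + 2^-1 * norm2 (p - u) ^+ 2 + (1 + c * mu) / 2 * norm2 (v - p) ^+ 2
    <= c * rv + 2^-1 * norm2 (v - u) ^+ 2.
Proof.
move=> mu_ge0 h_sc hpE hvE.
have cmu_ge0 : 0 <= c * mu by rewrite mulr_ge0 // ltW.
set D := norm2 (v - p) ^+ 2.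
have D_ge0 : 0 <= D by rewrite sqr_ge0.
rewrite -subr_le0; apply: (le0_of_le_mul01 (k := (1 + c * mu) / 2 * D)) => [|l l01].
  by rewrite mulr_ge0 ?divr_ge0 //; lra.
have /andP[l_gt0 _] := l01.
(* Test the prox inequality at [l *: v + (1 - l) *: p], then let [l] tend to [0]. *)
have := h_sc v p l l01; have := p_prox (l *: v + (1 - l) *: p).
rewrite hpE hvE sqr_norm2_comb -/D.
case: (h _) (h_ninfty (l *: v + (1 - l) *: p)) => [rz _| |] //=.
rewrite -!EFinM -!EFinD !lee_fin => prox_z sc_z.
have c_sc := ler_wpM2l (ltW c_gt0) sc_z.
by rewrite -(ler_pM2l l_gt0); lra.
Qed.

End Prox.

Lemma prox_step_lower_bound (R : realType) n d (A : 'M[R]_(n, d))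
    (h : 'cV[R]_d -> \bar R) (c rp rv : R) (x p v : 'cV[R]_d) (y y' : 'cV[R]_n) :
  (forall z, h z != -oo%E) -> 0 < c -> convex_fun h ->
  is_prox (fun z => (c%:E * h z)%E) (x - c *: (A^T *m y)) p ->
  h p = rp%:E -> h v = rv%:E ->
  c * (rp + dotv y' (A *m p)) - 2^-1 * norm2 (v - x) ^+ 2
    - c ^+ 2 * opnorm A ^+ 2 / 2 * norm2 (y' - y) ^+ 2
  <= c * (rv + dotv y' (A *m v)).
Proof.
move=> h_ninfty c_gt0 h_cvx p_prox hpE hvE.
have := prox_quadratic_growth h_ninfty c_gt0 p_prox (lexx 0) (strongly_convex0 h_cvx)
  hpE hvE.
have shift z : norm2 (z - (x - c *: (A^T *m y))) ^+ 2 = norm2 (z - x) ^+ 2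
    + 2 * c * (dotv y (A *m z) - dotv y (A *m x)) + c ^+ 2 * norm2 (A^T *m y) ^+ 2.
  have -> : z - (x - c *: (A^T *m y)) = (z - x) + c *: (A^T *m y).
    by apply/matrixP => i j; rewrite !mxE; ring.
  rewrite sqr_norm2D norm2Z ger0_norm ?(ltW c_gt0) // dotvZr dotvBl.
  by rewrite !(dotvC _ (A^T *m y)) -!dotv_mulmx; ring.
rewrite !shift mulr0 addr0.
have := dotv_mulmx_young A (y' - y) (p - v) (ltW c_gt0).
rewrite mulmxBr dotvBl !dotvBr norm2_distC.
have := sqr_ge0 (norm2 (p - x)); lra.
Qed.

Lemma BsumS (R : realType) (beta : nat -> R) s :
  Bsum beta s.+1 = Bsum beta s + beta s.
Proof. by rewrite /Bsum big_ord_recr. Qed.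

Lemma Bsum_ge0 (R : realType) (beta : nat -> R) s :
  (forall k, 0 <= beta k) -> 0 <= Bsum beta s.
Proof. by move=> beta_ge0; apply: sumr_ge0. Qed.

Lemma Bsum_gt0 (R : realType) (beta : nat -> R) s :
  (forall k, 0 < beta k) -> 0 < Bsum beta s.+1.
Proof.
by move=> beta_gt0; rewrite BsumS ltr_wpDl ?Bsum_ge0 // => k; apply: ltW.
Qed.

Section DualAveraging.
Variables (R : realType) (n d : nat) (A : 'M[R]_(n, d)) (g : 'cV[R]_d -> \bar R).
Variables (mu : R) (beta : nat -> R) (y : nat -> 'cV[R]_n) (x : nat -> 'cV[R]_d).
Hypotheses (mu_ge0 : 0 <= mu) (beta_gt0 : forall k, 0 < beta k).
Hypotheses (g_ninfty : forall v, g v != -oo%E) (g_fin : exists v, g v != +oo%E).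
Hypothesis g_sc : strongly_convex mu g.

Definition grad_sum s : 'cV[R]_d := \sum_(k < s) beta k *: (A^T *m y k.+1).

Hypothesis x_prox : forall s, is_prox (fun v => ((Bsum beta s.+1)%:E * g v)%E)
  (x 0%N - grad_sum s.+1) (x s.+1).

Local Notation phi_ := (phi A g beta y (x 0%N)).

Lemma grad_sumS s : grad_sum s.+1 = grad_sum s + beta s *: (A^T *m y s.+1).
Proof. by rewrite /grad_sum big_ord_recr. Qed.

Lemma phi0 v : phi_ 0 v = (2^-1 * norm2 (v - x 0%N) ^+ 2)%:E.
Proof. by rewrite /phi big_ord0 adde0. Qed.

Lemma phiS s v :
  phi_ s.+1 v = (phi_ s v + (beta s)%:E * (g v + (dotv (y s.+1) (A *m v))%:E))%E.
Proof. by rewrite /phi big_ord_recr addeA. Qed.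

Lemma phi_fin s v r : g v = r%:E ->
  phi_ s v =
    (Bsum beta s * r + (2^-1 * norm2 (v - x 0%N) ^+ 2 + dotv (grad_sum s) v))%:E.
Proof.
move=> gvE; elim: s => [|s IH].
  by rewrite phi0 /Bsum /grad_sum !big_ord0 dotv0l mul0r add0r addr0.
rewrite phiS IH gvE -EFinD BsumS grad_sumS dotvDl dotvZl -dotv_mulmx.
by congr EFin; ring.
Qed.

Lemma phi_infty s v : g v = +oo%E -> phi_ s.+1 v = +oo%E.
Proof.
move=> gvE.
have beta_oo k : ((beta k)%:E * (g v + (dotv (y k.+1) (A *m v))%:E))%E = +oo%E.
  by rewrite gvE addye // mulry gtr0_sg // mul1e.
by elim: s => [|s IH]; rewrite phiS beta_oo ?phi0 ?IH addey.
Qed.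

Lemma g_iterate_fin s : g (x s.+1) \is a fin_num.
Proof. exact: prox_fin_num g_ninfty (Bsum_gt0 s beta_gt0) (x_prox s) g_fin. Qed.

Lemma phi_iterate_fin s : phi_ s (x s) \is a fin_num.
Proof.
case: s => [|s]; first by rewrite phi0.
have /EFin_fin_numP[r gxE] := g_iterate_fin s.
by rewrite (phi_fin _ gxE).
Qed.

Lemma phi_iterate_growth s v :
  (phi_ s (x s) + ((1 + Bsum beta s * mu) / 2 * norm2 (v - x s) ^+ 2)%:E
    <= phi_ s v)%E.
Proof.
case: s => [|s].
  rewrite !phi0 /Bsum big_ord0 mul0r addr0 subrr norm2_0 -EFinD lee_fin.
  by rewrite expr0n /=; lra.
have /EFin_fin_numP[rx gxE] := g_iterate_fin s.
case gvE : (g v) (g_ninfty v) => [r| |] // _; last by rewrite (phi_infty _ gvE) leey.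
rewrite (phi_fin _ gxE) (phi_fin _ gvE) -EFinD lee_fin !sqr_norm2_complete.
have := prox_quadratic_growth g_ninfty (Bsum_gt0 s beta_gt0) (x_prox s) mu_ge0 g_sc
  gxE gvE.
lra.
Qed.

Lemma phistar_iterate s : phistar A g beta y (x 0%N) s = phi_ s (x s).
Proof.
apply/le_anti/andP; split; first by apply: ereal_inf_lbound; exists (x s).
apply: le_ereal_inf_tmp => _ [v _ <-]; apply: le_trans (phi_iterate_growth s v).
rewrite leeDl // lee_fin mulr_ge0 ?sqr_ge0 // divr_ge0 // addr_ge0 // mulr_ge0 //.
by apply: Bsum_ge0 => k; apply: ltW.
Qed.

End DualAveraging.

Theorem lemma2p1 (R : realType) (n d : nat) (A : 'M[R]_(n, d))
  (f : 'cV[R]_n -> \bar R) (g : 'cV[R]_d -> \bar R) (gamma mu : R)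
  (hgamma : 0 <= gamma) (hmu : 0 <= mu)
  (hf_proper : proper_fun f) (hf_convex : convex_fun f) (hf_closed : closed_fun f)
  (hf_smooth : smooth_inv gamma f)
  (hg_proper : proper_fun g) (hg_convex : convex_fun g) (hg_closed : closed_fun g)
  (hg_strong : strongly_convex mu g)
  (beta eta tau : nat -> R)
  (hbeta : forall t, 0 < beta t) (heta : forall t, 0 < eta t) (htau : forall t, 0 < tau t)
  (x xbar : nat -> 'cV[R]_d) (y : nat -> 'cV[R]_n)
  (hxbar : forall t, is_prox (fun v => ((eta t)%:E * g v)%E)
                       (x t - eta t *: (A^T *m y t)) (xbar t.+1))
  (hy : forall t, is_prox (fun v => ((tau t)%:E * conj_fun f v)%E)
                    (y t + tau t *: (A *m xbar t.+1)) (y t.+1))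
  (hx : forall t, is_prox (fun v => ((Bsum beta t.+1)%:E * g v)%E)
                    (x 0%N - \sum_(k < t.+1) beta k *: (A^T *m y k.+1)) (x t.+1))
  (t : nat) (hstep : eta t * (1 + Bsum beta t * mu) >= beta t) :
  (phistar A g beta y (x 0%N) t.+1 - phistar A g beta y (x 0%N) t >=
     (beta t)%:E * (g (xbar t.+1) + (dotv (y t.+1) (A *m xbar t.+1))%:E)
     - (beta t * opnorm A ^+ 2 * eta t / 2 * norm2 (y t.+1 - y t) ^+ 2)%:E)%E.
Proof.
have [g_ninfty g_fin] := hg_proper.
have /EFin_fin_numP[gx gxE] := g_iterate_fin hbeta g_ninfty g_fin hx t.
have /EFin_fin_numP[gxb gxbE] := prox_fin_num g_ninfty (heta t) (hxbar t) g_fin.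
have /EFin_fin_numP[P PE] := phi_iterate_fin hbeta g_ninfty g_fin hx t.
have growth := phi_iterate_growth hmu hbeta g_ninfty g_fin hg_strong hx t (x t.+1).
have step :=
  prox_step_lower_bound (y t.+1) g_ninfty (heta t) hg_convex (hxbar t) gxbE gxE.
rewrite !(phistar_iterate hmu hbeta g_ninfty g_fin hg_strong hx) phiS.
rewrite PE (phi_fin A beta y x t gxE) gxbE gxE -!EFinD !lee_fin in growth *.
have step_beta := ler_wpM2l (ltW (hbeta t)) step.
have growth_eta := ler_wpM2l (ltW (heta t)) growth.
have hstep_dist := ler_wpM2r (sqr_ge0 (norm2 (x t.+1 - x t))) hstep.
by rewrite -(ler_pM2l (heta t)); lra.
Qed.
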